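(* Let $\mathcal{A}$ be the adjacency matrix of a graph on $N$ nodes with $\mathcal{A}_{ii}=1$ for all $i$. Consider any plant with state-space dynamics $\dot x=Ax+B_1w+B_2u$, $z=C_1x+D_{12}u$, $y=C_2x+D_{21}w$, where $x,u,y$ are partitioned into $N$ site sub-signals. If a proper rational transfer matrix $K$ (controller $u=Ky$) is closed-loop TF-structured with respect to $\mathcal{A}$ for this plant, then $K$ is $\mathcal{A}$-structured-realizable.
   Context: Closed-loop TF-structure: consider the auxiliary system $\dot x=Ax+B_2u+\delta_x$, $y=C_2x+\delta_y$ in feedback with $u=Ky$ (assumed well-posed), and let $\Phi=\begin{bmatrix}\Phi_{xx}&\Phi_{xy}\\ \Phi_{ux}&\Phi_{uy}\end{bmatrix}$ be the resulting closed-loop transfer matrix from $(\delta_x,\delta_y)$ to $(x,u)$. $K$ is closed-loop TF-structured with respect to $\mathcal{A}$ if each of $\Phi_{xx},\Phi_{xy},\Phi_{ux},\Phi_{uy}$ (with inputs and outputs partitioned by site) is TF-structured with respect to $\mathcal{A}$, meaning its $(i,j)$ block is identically zero whenever $\mathcal{A}_{ij}=0$. A matrix $M$ partitioned into $N\times N$ blocks is in $\mathcal{S}(\mathcal{A})$ if its $(i,j)$ block is zero whenever $\mathcal{A}_{ij}=0$. An LTI system is $\mathcal{A}$-structured-realizable if it has a state-space realization $(A_K,B_K,C_K,D_K)$, with state partitioned into $N$ (possibly empty) sub-states, such that $A_K,B_K,C_K,D_K\in\mathcal{S}(\mathcal{A})$. *)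

From HB Require Import structures.
From mathcomp Require Import all_boot all_order all_algebra.
From mathcomp Require Import reals.
Set Implicit Arguments. Unset Strict Implicit. Unset Printing Implicit Defensive.
Import GRing.Theory.
Local Open Scope ring_scope.

Section Defs.
Variable R : realType.

(* the field of real rational functions in the Laplace variable s *)
Definition ratf := {fraction {poly R}}.

Definition cst (a : R) : ratf := FracField.tofrac (a%:P).
Definition svar : ratf := FracField.tofrac ('X : {poly R}).

Definition tfm m n (M : 'M[R]_(m, n)) : 'M[ratf]_(m, n) := map_mx cst M.

Definition proper_ratf (f : ratf) : Prop :=
  exists (p q : {poly R}), q != 0 /\ (size p <= size q)%N /\ f = FracField.tofrac p / FracField.tofrac q.

Definition proper_tf m n (K : 'M[ratf]_(m, n)) : Prop :=
  forall i j, proper_ratf (K i j).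

Definition ss_tf k m n (AK : 'M[R]_k) (BK : 'M[R]_(k, n)) (CK : 'M[R]_(m, k))
  (DK : 'M[R]_(m, n)) : 'M[ratf]_(m, n) :=
  tfm CK *m invmx (svar%:M - tfm AK) *m tfm BK + tfm DK.

(* Sparsity pattern: coordinates of signals are assigned to sites by maps
   rs (rows) and cs (columns); block (i,j) is the set of entries (p,q) with
   rs p = i, cs q = j. *)
Definition in_S T (zero : T) N (Adj : 'M[bool]_N) m n
  (rs : 'I_m -> 'I_N) (cs : 'I_n -> 'I_N) (M : 'M[T]_(m, n)) : Prop :=
  forall p q, ~~ Adj (rs p) (cs q) -> M p q = zero.

Definition real_in_S N Adj m n rs cs (M : 'M[R]_(m, n)) :=
  @in_S R 0 N Adj m n rs cs M.
Definition tf_structured N Adj m n rs cs (M : 'M[ratf]_(m, n)) :=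
  @in_S ratf 0 N Adj m n rs cs M.

(* Closed loop of  x' = A x + B2 u + dx,  y = C2 x + dy,  u = K y.
   Resolvent Gx = (sI - A)^{-1}. *)
Definition resolvent n (A : 'M[R]_n) : 'M[ratf]_n := invmx (svar%:M - tfm A).

Definition loop_mx n nu ny (A : 'M[R]_n) (B2 : 'M[R]_(n, nu)) (C2 : 'M[R]_(ny, n))
  (K : 'M[ratf]_(nu, ny)) : 'M[ratf]_nu :=
  1%:M - K *m tfm C2 *m resolvent A *m tfm B2.

Definition well_posed n nu ny A B2 C2 K := @loop_mx n nu ny A B2 C2 K \in unitmx.

Definition Phi_uy n nu ny A B2 C2 (K : 'M[ratf]_(nu, ny)) : 'M[ratf]_(nu, ny) :=
  invmx (@loop_mx n nu ny A B2 C2 K) *m K.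
Definition Phi_ux n nu ny A B2 C2 (K : 'M[ratf]_(nu, ny)) : 'M[ratf]_(nu, n) :=
  @Phi_uy n nu ny A B2 C2 K *m tfm C2 *m resolvent A.
Definition Phi_xy n nu ny A B2 C2 (K : 'M[ratf]_(nu, ny)) : 'M[ratf]_(n, ny) :=
  resolvent A *m tfm B2 *m @Phi_uy n nu ny A B2 C2 K.
Definition Phi_xx n nu ny A B2 C2 (K : 'M[ratf]_(nu, ny)) : 'M[ratf]_n :=
  resolvent A + resolvent A *m tfm B2 *m @Phi_ux n nu ny A B2 C2 K.

Definition closed_loop_TF_structured N (Adj : 'M[bool]_N) n nu ny
  (sx : 'I_n -> 'I_N) (su : 'I_nu -> 'I_N) (sy : 'I_ny -> 'I_N)
  A B2 C2 (K : 'M[ratf]_(nu, ny)) : Prop :=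
  [/\ tf_structured Adj sx sx (@Phi_xx n nu ny A B2 C2 K),
      tf_structured Adj sx sy (@Phi_xy n nu ny A B2 C2 K),
      tf_structured Adj su sx (@Phi_ux n nu ny A B2 C2 K) &
      tf_structured Adj su sy (@Phi_uy n nu ny A B2 C2 K)].

(* A-structured realizability: a realization whose state is split into N
   (possibly empty) sub-states via sk, with all four matrices in S(Adj). *)
Definition structured_realizable N (Adj : 'M[bool]_N) nu ny
  (su : 'I_nu -> 'I_N) (sy : 'I_ny -> 'I_N) (K : 'M[ratf]_(nu, ny)) : Prop :=
  exists (k : nat) (sk : 'I_k -> 'I_N) (AK : 'M[R]_k) (BK : 'M[R]_(k, ny))
         (CK : 'M[R]_(nu, k)) (DK : 'M[R]_(nu, ny)),
    [/\ real_in_S Adj sk sk AK, real_in_S Adj sk sy BK,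
        real_in_S Adj su sk CK, real_in_S Adj su sy DK &
        K = ss_tf AK BK CK DK].

End Defs.

(* Write Phi for the closed-loop maps and P for the inverse of the loop matrix
   I - K C2 (sI - A)^-1 B2.  From P = I + K C2 (sI - A)^-1 B2 P one gets
   Phi_ux = K C2 Phi_xx, hence K = Phi_uy - Phi_ux Phi_xx^-1 Phi_xy: K is what remains of
     M = [[I - s Phi_xx, s Phi_xy], [-Phi_ux, Phi_uy]]
   after closing its first block of outputs onto its first block of inputs through the
   identity.  M is proper, its first block column is strictly proper, and every block of M
   has the sparsity pattern Adj (on the diagonal of I - s Phi_xx this uses Adj_ii = 1).
   Realize M column by column, placing the whole state realizing column q at the site of
   q.  Then every state is fed only by inputs of its own site, so closing the loop adds
   B1 C1 to the state matrix, and (B1 C1)_ij <> 0 forces Adj between the sites of i and j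
   through C1. *)

From mathcomp Require Import all_boot all_order all_algebra.
From mathcomp Require Import reals.
Set Implicit Arguments. Unset Strict Implicit. Unset Printing Implicit Defensive.
Import GRing.Theory.
Local Open Scope ring_scope.

Lemma invmx_eq (T : comUnitRingType) k (X Y : 'M[T]_k) : X *m Y = 1%:M -> invmx X = Y.
Proof. by move=> XY1; rewrite -[LHS]mulmx1 -XY1 (mulKmx (mulmx1_unit XY1).1). Qed.

Section FeedbackIdentities.
Variables (T : comUnitRingType) (k m : nat) (P1 P2 : 'M[T]_k).
Variables (B : 'M[T]_(k, m)) (C : 'M[T]_(m, k)).
Hypotheses (P1u : P1 \in unitmx) (P2u : P2 \in unitmx) (P12 : P1 - P2 = B *m C).

Lemma invmx_feedbackl : invmx P1 *m B *m C *m invmx P2 = invmx P2 - invmx P1.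
Proof.
rewrite -(mulmxA _ B) -P12 mulmxBr mulmxBl mulVmx // mul1mx -mulmxA mulmxV //.
by rewrite mulmx1.
Qed.

Lemma invmx_feedbackr : invmx P2 *m B *m C *m invmx P1 = invmx P2 - invmx P1.
Proof.
rewrite -(mulmxA _ B) -P12 mulmxBr mulmxBl mulVmx // mul1mx -mulmxA mulmxV //.
by rewrite mulmx1.
Qed.

Lemma invmx_feedback_input : invmx P1 *m B *m (1%:M + C *m invmx P2 *m B) = invmx P2 *m B.
Proof.
rewrite mulmxDr mulmx1 !mulmxA invmx_feedbackl mulmxBl.
by rewrite addrC subrK.
Qed.

Lemma feedback_mulmx_inv :
  (1%:M - C *m invmx P1 *m B) *m (1%:M + C *m invmx P2 *m B) = 1%:M.
Proof.
rewrite mulmxBl mul1mx.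
have -> : C *m invmx P1 *m B *m (1%:M + C *m invmx P2 *m B) = C *m invmx P2 *m B.
  by rewrite -[C *m _ *m B]mulmxA -mulmxA invmx_feedback_input mulmxA.
by rewrite addrK.
Qed.

Lemma feedback_lft n p (B2 : 'M[T]_(k, n)) (C2 : 'M[T]_(p, k)) D12 D22 :
  C2 *m invmx P1 *m B2 + D22 +
    C2 *m invmx P1 *m B *m (1%:M + C *m invmx P2 *m B) *m (C *m invmx P1 *m B2 + D12) =
  C2 *m invmx P2 *m (B2 + B *m D12) + D22.
Proof.
have -> : C2 *m invmx P1 *m B *m (1%:M + C *m invmx P2 *m B) = C2 *m invmx P2 *m B.
  by rewrite -[C2 *m _ *m B]mulmxA -mulmxA invmx_feedback_input mulmxA.
rewrite mulmxDr.
have -> : C2 *m invmx P2 *m B *m (C *m invmx P1 *m B2) =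
    C2 *m invmx P2 *m B2 - C2 *m invmx P1 *m B2.
  by rewrite -mulmxBl -mulmxBr -invmx_feedbackr !mulmxA.
rewrite [_ *m (B2 + _)]mulmxDr mulmxA.
by rewrite addrACA (addrC (C2 *m invmx P1 *m B2)) subrK addrA addrAC.
Qed.

End FeedbackIdentities.

Section LoopIdentities.
Variables (T : comUnitRingType) (n nu ny : nat).
Variables (K : 'M[T]_(nu, ny)) (C : 'M[T]_(ny, n)) (G : 'M[T]_n) (B : 'M[T]_(n, nu)).
Hypothesis loop_unit : 1%:M - K *m C *m G *m B \in unitmx.
Local Notation P := (invmx (1%:M - K *m C *m G *m B)).

Lemma loop_invE : P = 1%:M + K *m C *m G *m B *m P.
Proof. by rewrite -[LHS]mul1mx -{1}(subrK (K *m C *m G *m B) 1%:M) mulmxDl mulmxV. Qed.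

Lemma loop_state_factor : P *m K *m C *m G = K *m C *m (G + G *m B *m (P *m K *m C *m G)).
Proof. by rewrite {1}loop_invE !mulmxDl mul1mx mulmxDr !mulmxA. Qed.

Lemma loop_output_factor : K *m C *m (G *m B *m (P *m K)) = P *m K - K.
Proof. by rewrite [in RHS]loop_invE mulmxDl mul1mx addrAC subrr add0r !mulmxA. Qed.

Lemma controller_from_closed_loop (Pxx := G + G *m B *m (P *m K *m C *m G)) :
  Pxx \in unitmx -> P *m K - P *m K *m C *m G *m invmx Pxx *m (G *m B *m (P *m K)) = K.
Proof.
move=> Pxx_unit; rewrite loop_state_factor -/Pxx -[K *m C *m Pxx *m _]mulmxA mulmxV // mulmx1.
by rewrite loop_output_factor opprB addrC subrK.
Qed.
End LoopIdentities.

Section TransferMatrices.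
Variable R : realType.
Local Notation F := (ratf R).

Lemma tfmE m n (M : 'M[R]_(m, n)) : tfm M = map_mx ((@FracField.tofrac _) \o polyC) M.
Proof. by apply/matrixP => i j; rewrite !mxE. Qed.

Lemma tfmD m n (M1 M2 : 'M[R]_(m, n)) : tfm (M1 + M2) = tfm M1 + tfm M2.
Proof. by rewrite !tfmE map_mxD. Qed.

Lemma tfmN m n (M : 'M[R]_(m, n)) : tfm (- M) = - tfm M.
Proof. by rewrite !tfmE map_mxN. Qed.

Lemma tfmM m n p (M1 : 'M[R]_(m, n)) (M2 : 'M[R]_(n, p)) :
  tfm (M1 *m M2) = tfm M1 *m tfm M2.
Proof. by rewrite !tfmE map_mxM. Qed.

Lemma tfm0 m n : tfm (0 : 'M[R]_(m, n)) = 0.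
Proof. by rewrite tfmE map_mx0. Qed.

Lemma tfm_scalar n (c : R) : tfm (c%:M : 'M_n) = (cst c)%:M.
Proof. by rewrite tfmE map_scalar_mx. Qed.

Lemma tfm1 n : tfm (1%:M : 'M[R]_n) = 1%:M.
Proof. by rewrite tfm_scalar /cst tofrac1. Qed.

Lemma tfm_delta m n (i : 'I_m) (j : 'I_n) : tfm (delta_mx i j : 'M[R]_(m, n)) = delta_mx i j.
Proof. by rewrite tfmE map_delta_mx. Qed.

Lemma tfm_block m1 m2 n1 n2 (A : 'M[R]_(m1, n1)) (B : 'M[R]_(m1, n2))
    (C : 'M[R]_(m2, n1)) (D : 'M[R]_(m2, n2)) :
  tfm (block_mx A B C D) = block_mx (tfm A) (tfm B) (tfm C) (tfm D).
Proof. by rewrite !tfmE map_block_mx. Qed.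

Lemma tfm_row m n1 n2 (A : 'M[R]_(m, n1)) (B : 'M[R]_(m, n2)) :
  tfm (row_mx A B) = row_mx (tfm A) (tfm B).
Proof. by rewrite !tfmE map_row_mx. Qed.

Lemma tfm_col m1 m2 n (A : 'M[R]_(m1, n)) (B : 'M[R]_(m2, n)) :
  tfm (col_mx A B) = col_mx (tfm A) (tfm B).
Proof. by rewrite !tfmE map_col_mx. Qed.

Lemma svar_neq0 : svar R != 0.
Proof. by rewrite tofrac_eq0 polyX_eq0. Qed.

(* [sI - A] is the image of the characteristic matrix of [A], whose determinant is monic. *)
Lemma pencil_unit k (A : 'M[R]_k) : (svar R)%:M - tfm A \in unitmx.
Proof.
have -> : (svar R)%:M - tfm A = map_mx (@FracField.tofrac _) (char_poly_mx A).
  by apply/matrixP => i j; rewrite !mxE rmorphB rmorphMn.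
rewrite unitmxE det_map_mx unitfE tofrac_eq0.
exact: monic_neq0 (char_poly_monic A).
Qed.

Lemma pencil_resolvent k (A : 'M[R]_k) :
  ((svar R)%:M - tfm A) *m resolvent A = 1%:M.
Proof. exact: mulmxV (pencil_unit A). Qed.

Lemma scale_svar_resolvent k (A : 'M[R]_k) :
  svar R *: resolvent A = 1%:M + tfm A *m resolvent A.
Proof.
by rewrite -mul_scalar_mx -[(svar R)%:M](subrK (tfm A)) mulmxDl pencil_resolvent.
Qed.

Lemma ss_tfE k m n (A : 'M[R]_k) B C (D : 'M[R]_(m, n)) :
  ss_tf A B C D = tfm C *m resolvent A *m tfm B + tfm D.
Proof. by []. Qed.

Lemma pencil_block k1 k2 (A1 : 'M[R]_k1) A12 A21 (A2 : 'M[R]_k2) :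
  (svar R)%:M - tfm (block_mx A1 A12 A21 A2) =
  block_mx ((svar R)%:M - tfm A1) (- tfm A12) (- tfm A21) ((svar R)%:M - tfm A2).
Proof.
by rewrite tfm_block (scalar_mx_block k1 k2) opp_block_mx add_block_mx !add0r.
Qed.

Lemma resolvent_block_utri k1 k2 (A1 : 'M[R]_k1) A12 (A2 : 'M[R]_k2) :
  resolvent (block_mx A1 A12 0 A2) =
  block_mx (resolvent A1) (resolvent A1 *m tfm A12 *m resolvent A2) 0 (resolvent A2).
Proof.
apply: invmx_eq; rewrite pencil_block tfm0 oppr0 mulmx_block !mulmx0 !mul0mx.
by rewrite !addr0 !add0r !mulmxA !pencil_resolvent mul1mx mulNmx addrN (scalar_mx_block k1 k2).
Qed.

Lemma pencil_feedback k m (A : 'M[R]_k) (B : 'M[R]_(k, m)) C :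
  ((svar R)%:M - tfm A) - ((svar R)%:M - tfm (A + B *m C)) = tfm B *m tfm C.
Proof. by rewrite tfmD tfmM opprB addrA subrKA addrC addKr. Qed.

Lemma resolvent_feedback_inv k m (A : 'M[R]_k) (B : 'M[R]_(k, m)) C :
  (1%:M - tfm C *m resolvent A *m tfm B) *m
    (1%:M + tfm C *m resolvent (A + B *m C) *m tfm B) = 1%:M.
Proof.
exact: feedback_mulmx_inv (pencil_unit A) (pencil_unit _) (pencil_feedback A B C).
Qed.

Definition ss_realizable m n (M : 'M[F]_(m, n)) (D : 'M[R]_(m, n)) :=
  exists k (A : 'M[R]_k) B C, M = ss_tf A B C D.

Lemma ss_realizable_const m n (D : 'M[R]_(m, n)) : ss_realizable (tfm D) D.
Proof. by exists 0%N, 0, 0, 0; rewrite ss_tfE !tfm0 !mul0mx add0r. Qed.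

Lemma ss_realizable_resolvent k (A : 'M[R]_k) : ss_realizable (resolvent A) 0.
Proof. by exists k, A, 1%:M, 1%:M; rewrite ss_tfE tfm1 tfm0 mul1mx mulmx1 addr0. Qed.

Lemma ss_tfD k1 k2 m n (A1 : 'M[R]_k1) B1 C1 (A2 : 'M[R]_k2) B2 C2 (D1 D2 : 'M[R]_(m, n)) :
  ss_tf A1 B1 C1 D1 + ss_tf A2 B2 C2 D2 =
  ss_tf (block_mx A1 0 0 A2) (col_mx B1 B2) (row_mx C1 C2) (D1 + D2).
Proof.
rewrite !ss_tfE resolvent_block_utri tfm_row tfm_col tfmD tfm0 mulmx0 mul0mx.
by rewrite mul_row_block !mulmx0 addr0 add0r mul_row_col addrACA.
Qed.

Lemma ss_tfM k1 k2 m p n (A1 : 'M[R]_k1) B1 C1 (D1 : 'M[R]_(m, p))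
    (A2 : 'M[R]_k2) B2 C2 (D2 : 'M[R]_(p, n)) :
  ss_tf A1 B1 C1 D1 *m ss_tf A2 B2 C2 D2 =
  ss_tf (block_mx A1 (B1 *m C2) 0 A2) (col_mx (B1 *m D2) B2) (row_mx C1 (D1 *m C2))
    (D1 *m D2).
Proof.
rewrite !ss_tfE resolvent_block_utri tfm_row tfm_col !tfmM mul_row_block !mulmx0.
rewrite addr0 mul_row_col mulmxDl !mulmxDr !mulmxA mulmxDl !addrA.
by rewrite (addrC (tfm C1 *m resolvent A1 *m tfm B1 *m tfm D2)).
Qed.

Lemma ss_realizableD m n (M1 M2 : 'M[F]_(m, n)) D1 D2 :
  ss_realizable M1 D1 -> ss_realizable M2 D2 -> ss_realizable (M1 + M2) (D1 + D2).
Proof.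
move=> [k1 [A1 [B1 [C1 ->]]]] [k2 [A2 [B2 [C2 ->]]]].
by rewrite ss_tfD; do 4!eexists.
Qed.

Lemma ss_realizableM m p n (M1 : 'M[F]_(m, p)) (M2 : 'M[F]_(p, n)) D1 D2 :
  ss_realizable M1 D1 -> ss_realizable M2 D2 -> ss_realizable (M1 *m M2) (D1 *m D2).
Proof.
move=> [k1 [A1 [B1 [C1 ->]]]] [k2 [A2 [B2 [C2 ->]]]].
by rewrite ss_tfM; do 4!eexists.
Qed.

Lemma ss_realizableN m n (M : 'M[F]_(m, n)) D : ss_realizable M D -> ss_realizable (- M) (- D).
Proof.
move=> MD; have := ss_realizableM (ss_realizable_const (- 1%:M)) MD.
by rewrite tfmN tfm1 !mulNmx !mul1mx.
Qed.

Lemma ss_realizable_feedback m (L : 'M[F]_m) :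
  ss_realizable L 0 -> ss_realizable (invmx (1%:M - L)) 1%:M.
Proof.
move=> [k [A [B [C ->]]]]; exists k, (A + B *m C), B, C.
rewrite ss_tfE tfm0 addr0 (invmx_eq (resolvent_feedback_inv A B C)).
by rewrite ss_tfE tfm1 addrC.
Qed.

Lemma block_mx_decomp (T : ringType) m1 m2 n1 n2 (X11 : 'M[T]_(m1, n1)) X12 X21
    (X22 : 'M[T]_(m2, n2)) :
  block_mx X11 X12 X21 X22 =
    col_mx 1%:M 0 *m (X11 *m row_mx 1%:M 0 + X12 *m row_mx 0 1%:M) +
    col_mx 0 1%:M *m (X21 *m row_mx 1%:M 0 + X22 *m row_mx 0 1%:M).
Proof.
rewrite !mul_mx_row !mulmx1 !mulmx0 !add_row_mx !addr0 !add0r !mul_col_mx !mul1mx.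
by rewrite !mul0mx add_col_mx !addr0 !add0r block_mxEv.
Qed.

Lemma ss_realizable_block m1 m2 n1 n2 (M11 : 'M[F]_(m1, n1)) (M12 : 'M[F]_(m1, n2))
    (M21 : 'M[F]_(m2, n1)) (M22 : 'M[F]_(m2, n2)) D11 D12 D21 D22 :
  ss_realizable M11 D11 -> ss_realizable M12 D12 ->
  ss_realizable M21 D21 -> ss_realizable M22 D22 ->
  ss_realizable (block_mx M11 M12 M21 M22) (block_mx D11 D12 D21 D22).
Proof.
move=> h11 h12 h21 h22; rewrite block_mx_decomp [block_mx D11 _ _ _]block_mx_decomp.
have const := @ss_realizable_const.
have := ss_realizableD
  (ss_realizableM (const _ _ (col_mx 1%:M 0))
    (ss_realizableD (ss_realizableM h11 (const _ _ (row_mx 1%:M 0)))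
                    (ss_realizableM h12 (const _ _ (row_mx 0 1%:M)))))
  (ss_realizableM (const _ _ (col_mx 0 1%:M))
    (ss_realizableD (ss_realizableM h21 (const _ _ (row_mx 1%:M 0)))
                    (ss_realizableM h22 (const _ _ (row_mx 0 1%:M))))).
by rewrite !tfm_col !tfm_row !tfm1 !tfm0.
Qed.

Lemma ss_realizable_svar_inv : ss_realizable ((svar R)^-1%:M : 'M_1) 0.
Proof.
exists 1%N, 0, 1%:M, 1%:M.
by rewrite /ss_tf tfm1 tfm0 subr0 mul1mx mulmx1 addr0 invmx_scalar.
Qed.

Lemma ss_realizable_svar_invX k : ss_realizable (((svar R)^-1 ^+ k.+1)%:M : 'M_1) 0.
Proof.
elim: k => [|k IHk]; first by rewrite expr1; exact: ss_realizable_svar_inv.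
have := ss_realizableM IHk ss_realizable_svar_inv.
by rewrite mulmx0 -scalar_mxM -exprSr.
Qed.

Lemma ss_realizable_poly_svar_invX m (P : {poly R}) : (size P <= m.+1)%N ->
  ss_realizable ((FracField.tofrac P * (svar R)^-1 ^+ m)%:M : 'M_1) (P`_m)%:M.
Proof.
elim: m P => [|m IHm] P sizeP.
  rewrite expr0 mulr1 {1}(size1_polyC sizeP) -/(cst _) -tfm_scalar.
  exact: ss_realizable_const.
set Q := drop_poly 1 P.
have sizeQ : (size Q <= m.+1)%N by rewrite size_drop_poly leq_subLR.
have := ss_realizableD (IHm Q sizeQ)
  (ss_realizableM (ss_realizable_const (P`_0)%:M) (ss_realizable_svar_invX m)).
rewrite mulmx0 addr0 coef_drop_poly addn1 tfm_scalar -scalar_mxM -raddfD /=.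
suff -> : FracField.tofrac Q * (svar R)^-1 ^+ m + cst (P`_0) * (svar R)^-1 ^+ m.+1 =
  FracField.tofrac P * (svar R)^-1 ^+ m.+1 by [].
have -> : FracField.tofrac P = FracField.tofrac Q * svar R + cst (P`_0).
  rewrite -rmorphM -rmorphD; congr FracField.tofrac.
  apply/polyP => i; rewrite coefD coefMX coefC coef_drop_poly.
  by case: i => [|i]; rewrite ?add0r ?addr0 ?addn1.
rewrite mulrDl; congr (_ + _).
by rewrite exprS mulrA -(mulrA _ (svar R)) mulfV ?svar_neq0 // mulr1.
Qed.

(* Dividing numerator and denominator by [lead_coef q * s ^ deg q] turns them into
   polynomials in the integrator [1 / s]; the denominator has feedthrough [1], so its
   inverse is realized by a feedback loop. *)
Lemma ss_realizable_proper_ratf (f : F) :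
  proper_ratf f -> exists d, ss_realizable (f%:M : 'M_1) d.
Proof.
case=> p [q [q_neq0 [sizepq ->]]].
set m := (size q).-1; set c := lead_coef q.
have sizeq : size q = m.+1 by rewrite prednK // size_poly_gt0.
have c_neq0 : c != 0 by rewrite lead_coef_eq0.
set u := cst c^-1 * (svar R)^-1 ^+ m.
have u_neq0 : u != 0.
  apply: mulf_neq0; first by rewrite tofrac_eq0 polyC_eq0 invr_eq0.
  by rewrite expf_neq0 // invr_eq0 svar_neq0.
have realize (r : {poly R}) : (size r <= m.+1)%N ->
    ss_realizable ((FracField.tofrac r * u)%:M : 'M_1) (c^-1 * r`_m)%:M.
  have -> : FracField.tofrac r * u = FracField.tofrac (c^-1 *: r) * (svar R)^-1 ^+ m.
    by rewrite -mul_polyC rmorphM /= mulrA [FracField.tofrac r * _]mulrC.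
  move=> sizer; rewrite -coefZ.
  by apply: ss_realizable_poly_svar_invX; rewrite (leq_trans (size_scale_leq _ _)).
have realizeQ := realize q (eq_leq sizeq).
rewrite [c^-1 * _]mulrC -lead_coefE mulfV // in realizeQ.
have := ss_realizableD (ss_realizable_const 1%:M) (ss_realizableN realizeQ).
rewrite tfm1 subrr => /ss_realizable_feedback.
rewrite subKr invmx_scalar => realizeQinv.
have := ss_realizableM (realize p (leq_trans sizepq (eq_leq sizeq))) realizeQinv.
rewrite -scalar_mxM invfM mulrACA mulfV // mulr1 => realizef.
by eexists; exact: realizef.
Qed.

Lemma ss_realizable_sum m n (I : Type) (r : seq I) (P : pred I) (G : I -> 'M[F]_(m, n)) :
  (forall i, P i -> exists D, ss_realizable (G i) D) ->
  exists D, ss_realizable (\sum_(i <- r | P i) G i) D.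
Proof.
move=> realizeG; apply: (big_ind (fun M => exists D, ss_realizable M D)) => //.
  by exists 0; rewrite -tfm0; exact: ss_realizable_const.
by move=> M1 M2 [D1 h1] [D2 h2]; exists (D1 + D2); exact: ss_realizableD.
Qed.

Lemma ss_realizable_proper m n (K : 'M[F]_(m, n)) :
  proper_tf K -> exists D, ss_realizable K D.
Proof.
move=> properK; rewrite (matrix_sum_delta K).
apply: ss_realizable_sum => i _; apply: ss_realizable_sum => j _.
have [d realizeKij] := ss_realizable_proper_ratf (properK i j).
have := ss_realizableM (ss_realizableM (ss_realizable_const (delta_mx i 0)) realizeKij)
  (ss_realizable_const (delta_mx 0 j)).
rewrite !tfm_delta mul_mx_scalar -scalemxAl mul_delta_mx => realize_ij.
by eexists; exact: realize_ij.
Qed.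

Lemma mulmx_ss_tf k m n m' n' (A : 'M[R]_k) B C (D : 'M[R]_(m, n))
    (W : 'M[R]_(m', m)) (E : 'M[R]_(n, n')) :
  tfm W *m ss_tf A B C D *m tfm E = ss_tf A (B *m E) (W *m C) (W *m D *m E).
Proof. by rewrite !ss_tfE !tfmM mulmxDr mulmxDl !mulmxA. Qed.

Definition lft_id n1 m2 n2 (M : 'M[F]_(n1 + m2, n1 + n2)) : 'M[F]_(m2, n2) :=
  drsubmx M + dlsubmx M *m invmx (1%:M - ulsubmx M) *m ursubmx M.

Lemma ss_tf_block k n1 n2 m2 (A : 'M[R]_k) (B1 : 'M[R]_(k, n1)) (B2 : 'M[R]_(k, n2))
    (C1 : 'M[R]_(n1, k)) (C2 : 'M[R]_(m2, k)) D11 D12 D21 D22 :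
  ss_tf A (row_mx B1 B2) (col_mx C1 C2) (block_mx D11 D12 D21 D22) =
  block_mx (ss_tf A B1 C1 D11) (ss_tf A B2 C1 D12) (ss_tf A B1 C2 D21) (ss_tf A B2 C2 D22).
Proof.
by rewrite !ss_tfE tfm_col tfm_row tfm_block mul_col_mx mul_col_row add_block_mx.
Qed.

Lemma ss_tf_lft k n1 n2 m2 (A : 'M[R]_k) (B1 : 'M[R]_(k, n1)) (B2 : 'M[R]_(k, n2))
    (C1 : 'M[R]_(n1, k)) (C2 : 'M[R]_(m2, k)) D12 D22
    (M := ss_tf A (row_mx B1 B2) (col_mx C1 C2) (block_mx 0 D12 0 D22)) :
  1%:M - ulsubmx M \in unitmx /\
  lft_id M = ss_tf (A + B1 *m C1) (B2 + B1 *m D12) C2 D22.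
Proof.
have inv1 := resolvent_feedback_inv A B1 C1.
rewrite /lft_id /M ss_tf_block block_mxKul block_mxKur block_mxKdl block_mxKdr.
rewrite !ss_tfE !tfm0 !addr0.
split; first exact: (mulmx1_unit inv1).1.
rewrite (invmx_eq inv1) tfmD tfmM.
exact: (feedback_lft (pencil_unit A) (pencil_unit (A + B1 *m C1))
  (pencil_feedback A B1 C1) (tfm B2) (tfm C2) (tfm D12) (tfm D22)).
Qed.

Section SiteStructure.
Variables (N : nat) (Adj : 'M[bool]_N).
Hypothesis Adj_refl : forall i, Adj i i.

Definition cat_sites k1 k2 (s1 : 'I_k1 -> 'I_N) (s2 : 'I_k2 -> 'I_N) (i : 'I_(k1 + k2)) :=
  match split i with inl a => s1 a | inr b => s2 b end.

Lemma cat_sites_lshift k1 k2 s1 s2 (a : 'I_k1) :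
  @cat_sites k1 k2 s1 s2 (lshift k2 a) = s1 a.
Proof. by rewrite /cat_sites (unsplitK (inl _ a)). Qed.

Lemma cat_sites_rshift k1 k2 s1 s2 (b : 'I_k2) :
  @cat_sites k1 k2 s1 s2 (rshift k1 b) = s2 b.
Proof. by rewrite /cat_sites (unsplitK (inr _ b)). Qed.

Definition site_diag k n (sk : 'I_k -> 'I_N) (cs : 'I_n -> 'I_N) (B : 'M[R]_(k, n)) :=
  forall i q, B i q != 0 -> sk i = cs q.

Lemma site_diag_in_S k n sk cs (B : 'M[R]_(k, n)) :
  site_diag sk cs B -> real_in_S Adj sk cs B.
Proof.
move=> diagB i q; apply: contraNeq => /diagB->; exact: Adj_refl.
Qed.

Lemma site_diag_mul_in_S k n l sk cs (t : 'I_l -> 'I_N) (B : 'M[R]_(k, n)) X :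
  site_diag sk cs B -> real_in_S Adj cs t X -> real_in_S Adj sk t (B *m X).
Proof.
move=> diagB SX i j nAdj; rewrite !mxE big1 // => r _.
have [->|/diagB skr] := eqVneq (B i r) 0; first by rewrite mul0r.
by rewrite SX ?mulr0 // -skr.
Qed.

Lemma in_SD m n rs cs (M1 M2 : 'M[R]_(m, n)) :
  real_in_S Adj rs cs M1 -> real_in_S Adj rs cs M2 -> real_in_S Adj rs cs (M1 + M2).
Proof. by move=> S1 S2 p q nAdj; rewrite mxE S1 // S2 // addr0. Qed.

Lemma in_S_usubmx m1 m2 n s1 s2 cs (M : 'M[R]_(m1 + m2, n)) :
  real_in_S Adj (cat_sites s1 s2) cs M -> real_in_S Adj s1 cs (usubmx M).
Proof. by move=> SM p q nAdj; rewrite mxE SM // cat_sites_lshift. Qed.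

Lemma in_S_dsubmx m1 m2 n s1 s2 cs (M : 'M[R]_(m1 + m2, n)) :
  real_in_S Adj (cat_sites s1 s2) cs M -> real_in_S Adj s2 cs (dsubmx M).
Proof. by move=> SM p q nAdj; rewrite mxE SM // cat_sites_rshift. Qed.

Lemma in_S_rsubmx m n1 n2 rs s1 s2 (M : 'M[R]_(m, n1 + n2)) :
  real_in_S Adj rs (cat_sites s1 s2) M -> real_in_S Adj rs s2 (rsubmx M).
Proof. by move=> SM p q nAdj; rewrite mxE SM // cat_sites_rshift. Qed.

Lemma site_diag_lsubmx k n1 n2 sk s1 s2 (B : 'M[R]_(k, n1 + n2)) :
  site_diag sk (cat_sites s1 s2) B -> site_diag sk s1 (lsubmx B).
Proof. by move=> diagB i q; rewrite mxE => /diagB; rewrite cat_sites_lshift. Qed.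

Lemma site_diag_rsubmx k n1 n2 sk s1 s2 (B : 'M[R]_(k, n1 + n2)) :
  site_diag sk (cat_sites s1 s2) B -> site_diag sk s2 (rsubmx B).
Proof. by move=> diagB i q; rewrite mxE => /diagB; rewrite cat_sites_rshift. Qed.

(* [Z] marks the columns on which a loop will be closed: they carry no feedthrough. *)
Definition site_realizable m n (rs : 'I_m -> 'I_N) (cs : 'I_n -> 'I_N) (Z : pred 'I_n)
    (M : 'M[F]_(m, n)) :=
  exists k (sk : 'I_k -> 'I_N) (A : 'M[R]_k) B C D, M = ss_tf A B C D /\
    [/\ real_in_S Adj sk sk A, site_diag sk cs B, real_in_S Adj rs sk C,
        real_in_S Adj rs cs D & forall p q, Z q -> D p q = 0].

Lemma site_realizable0 m n rs cs Z : @site_realizable m n rs cs Z 0.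
Proof.
exists 0%N, (ffun0 (card_ord 0)), 0, 0, 0, 0.
split; first by rewrite ss_tfE !tfm0 !mul0mx addr0.
by split=> [[]|[]|p []|p q _|p q _] //; rewrite mxE.
Qed.

Lemma site_realizableD m n rs cs Z (M1 M2 : 'M[F]_(m, n)) :
  site_realizable rs cs Z M1 -> site_realizable rs cs Z M2 ->
  site_realizable rs cs Z (M1 + M2).
Proof.
move=> [k1 [sk1 [A1 [B1 [C1 [D1 [-> [SA1 dB1 SC1 SD1 ZD1]]]]]]]].
move=> [k2 [sk2 [A2 [B2 [C2 [D2 [-> [SA2 dB2 SC2 SD2 ZD2]]]]]]]].
exists (k1 + k2)%N, (cat_sites sk1 sk2); rewrite ss_tfD; do 4!eexists; split=> //; split.
- move=> i j; case: (split_ordP i) => a ->; case: (split_ordP j) => b ->;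
    rewrite ?cat_sites_lshift ?cat_sites_rshift ?block_mxEul ?block_mxEur
      ?block_mxEdl ?block_mxEdr ?mxE //; [exact: SA1 | exact: SA2].
- move=> i q; case: (split_ordP i) => a ->;
    rewrite ?cat_sites_lshift ?cat_sites_rshift ?col_mxEu ?col_mxEd; [exact: dB1 | exact: dB2].
- move=> p j; case: (split_ordP j) => a ->;
    rewrite ?cat_sites_lshift ?cat_sites_rshift ?row_mxEl ?row_mxEr; [exact: SC1 | exact: SC2].
- exact: in_SD.
- by move=> p q Zq; rewrite mxE ZD1 // ZD2 // addr0.
Qed.

Lemma site_realizable_sum m n rs cs Z (I : Type) (r : seq I) (P : pred I)
    (G : I -> 'M[F]_(m, n)) :
  (forall i, P i -> site_realizable rs cs Z (G i)) ->
  site_realizable rs cs Z (\sum_(i <- r | P i) G i).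
Proof.
by move=> realizeG; apply: big_ind => //; [exact: site_realizable0 | exact: site_realizableD].
Qed.

Definition col_proj n (q : 'I_n) : 'M[R]_n := diag_mx (delta_mx 0 q).

Definition row_mask m (rs : 'I_m -> 'I_N) (c : 'I_N) : 'M[R]_m :=
  diag_mx (\row_p (Adj (rs p) c)%:R).

Lemma sum_col_proj n : \sum_(q < n) col_proj q = 1%:M.
Proof.
apply/matrixP => i j; rewrite summxE (bigD1 i) //= big1 => [|q /negbTE qi]; rewrite !mxE.
  by rewrite !eqxx addr0.
by rewrite eq_sym qi mul0rn.
Qed.

Lemma row_mask_structured m n rs cs (M : 'M[F]_(m, n)) q :
  tf_structured Adj rs cs M ->
  tfm (row_mask rs (cs q)) *m M *m tfm (col_proj q) = M *m tfm (col_proj q).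
Proof.
move=> SM; apply/matrixP => p j; rewrite !tfmE !map_diag_mx !mul_mx_diag mul_diag_mx.
rewrite !mxE eqxx /=; have [<-|_] := eqVneq q j; last by rewrite rmorph0 !mulr0.
by case: (boolP (Adj (rs p) (cs q))) => [_|/SM->]; rewrite ?rmorph1 ?mul1r ?mul0r.
Qed.

(* The whole state sits at site [cs q]; the row mask loses nothing because [M] is
   structured. *)
Lemma site_realizable_col m n rs cs (Z : pred 'I_n) (M : 'M[F]_(m, n))
    k (A : 'M[R]_k) B C D q :
  tf_structured Adj rs cs M -> M = ss_tf A B C D -> (forall p j, Z j -> D p j = 0) ->
  site_realizable rs cs Z (M *m tfm (col_proj q)).
Proof.
move=> SM eM ZD; set W := row_mask rs (cs q).
exists k, (fun=> cs q), A, (B *m col_proj q), (W *m C), (W *m D *m col_proj q).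
split; first by rewrite -(row_mask_structured q SM) eM mulmx_ss_tf.
split.
- by move=> i j; rewrite Adj_refl.
- move=> i j; rewrite mul_mx_diag !mxE eqxx /=.
  by have [->|_] := eqVneq q j; last by rewrite mulr0 eqxx.
- by move=> p i nAdj; rewrite mul_diag_mx !mxE (negbTE nAdj) mul0r.
- move=> p j nAdj; rewrite mul_mx_diag mul_diag_mx !mxE eqxx /=.
  by have [qj|_] := eqVneq q j; rewrite ?mulr0 // qj (negbTE nAdj) !mul0r.
- by move=> p j Zj; rewrite mul_mx_diag mul_diag_mx !mxE ZD // mulr0 mul0r.
Qed.

Lemma site_realizable_structured m n rs cs (Z : pred 'I_n) (M : 'M[F]_(m, n)) D :
  tf_structured Adj rs cs M -> ss_realizable M D -> (forall p j, Z j -> D p j = 0) ->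
  site_realizable rs cs Z M.
Proof.
move=> SM [k [A [B [C eM]]]] ZD.
rewrite -[M]mulmx1 -tfm1 -sum_col_proj.
rewrite (big_morph _ (@tfmD n n) (@tfm0 n n)) mulmx_sumr.
by apply: site_realizable_sum => q _; exact: site_realizable_col eM ZD.
Qed.

Lemma structured_realizable_lft n1 m2 n2 (s1 : 'I_n1 -> 'I_N) (su : 'I_m2 -> 'I_N)
    (sy : 'I_n2 -> 'I_N) (M : 'M[F]_(n1 + m2, n1 + n2)) :
  site_realizable (cat_sites s1 su) (cat_sites s1 sy) (fun j => (j < n1)%N) M ->
  1%:M - ulsubmx M \in unitmx /\ structured_realizable Adj su sy (lft_id M).
Proof.
move=> [k [sk [A [B [C [D [-> [SA dB SC SD ZD]]]]]]]].
have -> : D = block_mx 0 (ursubmx D) 0 (drsubmx D).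
  rewrite -[LHS]submxK; congr block_mx; apply/matrixP => i j;
    by rewrite !mxE ZD /= ?ltn_ord.
rewrite -[B]hsubmxK -[C]vsubmxK.
have [unitM ->] := ss_tf_lft A (lsubmx B) (rsubmx B) (usubmx C) (dsubmx C)
  (ursubmx D) (drsubmx D).
split=> //; do 6!eexists; split; last by [].
- exact: in_SD SA (site_diag_mul_in_S (site_diag_lsubmx dB) (in_S_usubmx SC)).
- apply: in_SD (site_diag_in_S (site_diag_rsubmx dB)) _.
  exact: site_diag_mul_in_S (site_diag_lsubmx dB) (in_S_rsubmx (in_S_usubmx SD)).
- exact: in_S_dsubmx SC.
- exact: in_S_rsubmx (in_S_dsubmx SD).
Qed.

End SiteStructure.

Section ClosedLoop.
Variables (n nu ny : nat) (A : 'M[R]_n) (B2 : 'M[R]_(n, nu)) (C2 : 'M[R]_(ny, n)).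
Variable K : 'M[F]_(nu, ny).
Local Notation Pxx := (Phi_xx A B2 C2 K).
Local Notation Pxy := (Phi_xy A B2 C2 K).
Local Notation Pux := (Phi_ux A B2 C2 K).
Local Notation Puy := (Phi_uy A B2 C2 K).

(* The factor [s] makes the first block row proper, with strictly proper first column. *)
Definition closed_loop_mx : 'M[F]_(n + nu, n + ny) :=
  block_mx (1%:M - svar R *: Pxx) (svar R *: Pxy) (- Pux) Puy.

Lemma scale_svar_Phi_xx :
  svar R *: Pxx = svar R *: resolvent A *m (1%:M + tfm B2 *m Pux).
Proof. by rewrite -scalemxAl mulmxDr mulmx1 mulmxA. Qed.

Lemma scale_svar_Phi_xy : svar R *: Pxy = svar R *: resolvent A *m tfm B2 *m Puy.
Proof. by rewrite -!scalemxAl. Qed.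

Lemma closed_loop_mx_realizable : proper_tf K ->
  exists2 D, ss_realizable closed_loop_mx D &
    forall p (j : 'I_(n + ny)), (j < n)%N -> D p j = 0.
Proof.
move=> /ss_realizable_proper[DK realizeK].
have realizeR := ss_realizable_resolvent A.
have realize_sR : ss_realizable (svar R *: resolvent A) 1%:M.
  have := ss_realizableD (ss_realizable_const 1%:M)
    (ss_realizableM (ss_realizable_const A) realizeR).
  by rewrite tfm1 mulmx0 addr0 scale_svar_resolvent.
have realizeL : ss_realizable (K *m tfm C2 *m resolvent A *m tfm B2) 0.
  have := ss_realizableM (ss_realizableM (ss_realizableM realizeK (ss_realizable_const C2))
    realizeR) (ss_realizable_const B2).
  by rewrite mulmx0 mul0mx.
have realizeP := ss_realizable_feedback realizeL.
have realize_uy : ss_realizable Puy DK.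
  by have := ss_realizableM realizeP realizeK; rewrite mul1mx.
have realize_ux : ss_realizable Pux 0.
  have := ss_realizableM (ss_realizableM realize_uy (ss_realizable_const C2)) realizeR.
  by rewrite mulmx0.
have realize_xx : ss_realizable (1%:M - svar R *: Pxx) 0.
  have realizeV := ss_realizableD (ss_realizable_const 1%:M)
    (ss_realizableM (ss_realizable_const B2) realize_ux).
  have := ss_realizableD (ss_realizable_const 1%:M)
    (ss_realizableN (ss_realizableM realize_sR realizeV)).
  by rewrite !tfm1 scale_svar_Phi_xx mulmx0 addr0 mul1mx subrr.
have realize_xy : ss_realizable (svar R *: Pxy) (B2 *m DK).
  have := ss_realizableM (ss_realizableM realize_sR (ss_realizable_const B2)) realize_uy.
  by rewrite scale_svar_Phi_xy mul1mx.
exists (block_mx 0 (B2 *m DK) (- 0) DK).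
  exact: ss_realizable_block realize_xx realize_xy (ss_realizableN realize_ux) realize_uy.
move=> p j; case: (split_ordP j) => [a ->|b ->] // _.
by case: (split_ordP p) => c ->; rewrite ?block_mxEul ?block_mxEdl ?oppr0 mxE.
Qed.

Lemma closed_loop_mx_structured N (Adj : 'M[bool]_N) (Adj_refl : forall i, Adj i i)
    (sx : 'I_n -> 'I_N) (su : 'I_nu -> 'I_N) (sy : 'I_ny -> 'I_N) :
  closed_loop_TF_structured Adj sx su sy A B2 C2 K ->
  tf_structured Adj (cat_sites sx su) (cat_sites sx sy) closed_loop_mx.
Proof.
case=> Sxx Sxy Sux Suy p q.
case: (split_ordP p) => a ->; case: (split_ordP q) => b ->;
  rewrite ?cat_sites_lshift ?cat_sites_rshift ?block_mxEul ?block_mxEur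
    ?block_mxEdl ?block_mxEdr => nAdj.
- have ab : a != b by apply: contraNneq nAdj => ->.
  have := Sxx a b nAdj; move: Pxx => P Pab.
  by rewrite !mxE Pab (negbTE ab) mulr0 subr0.
- by rewrite mxE Sxy // mulr0.
- by rewrite mxE Sux // oppr0.
- exact: Suy.
Qed.

Lemma lft_closed_loop_mx : well_posed A B2 C2 K ->
  1%:M - ulsubmx closed_loop_mx \in unitmx -> lft_id closed_loop_mx = K.
Proof.
rewrite /lft_id block_mxKul block_mxKur block_mxKdl block_mxKdr subKr => wp sPxx_unit.
have svar_unit : svar R \is a GRing.unit by rewrite unitfE svar_neq0.
have := sPxx_unit; rewrite (unitmxZ _ svar_unit) => Pxx_unit.
rewrite (invmxZ sPxx_unit) !mulNmx -2!scalemxAr -scalemxAl scalerA.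
rewrite mulfV ?svar_neq0 // scale1r.
exact: (controller_from_closed_loop wp Pxx_unit).
Qed.

End ClosedLoop.

End TransferMatrices.

Theorem theorem1 (R : realType) (N : nat) (Adj : 'M[bool]_N)
  (HAdj : forall i, Adj i i)
  (n nu ny nw nz : nat)
  (sx : 'I_n -> 'I_N) (su : 'I_nu -> 'I_N) (sy : 'I_ny -> 'I_N)
  (A : 'M[R]_n) (B1 : 'M[R]_(n, nw)) (B2 : 'M[R]_(n, nu))
  (C1 : 'M[R]_(nz, n)) (D12 : 'M[R]_(nz, nu))
  (C2 : 'M[R]_(ny, n)) (D21 : 'M[R]_(ny, nw))
  (K : 'M[ratf R]_(nu, ny)) :
  proper_tf K ->
  well_posed A B2 C2 K ->
  closed_loop_TF_structured Adj sx su sy A B2 C2 K ->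
  structured_realizable Adj su sy K.
Proof.
move=> properK wellposed SK.
have [D realizeM ZD] := closed_loop_mx_realizable A B2 C2 properK.
have SM := closed_loop_mx_structured HAdj SK.
have [M_unit] := structured_realizable_lft HAdj
  (site_realizable_structured HAdj SM realizeM ZD).
by rewrite (lft_closed_loop_mx wellposed M_unit).
Qed.
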